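(* Let $a,b\in\mathbb{H}$ have norm one and let $T_{a,b}(x)=axb$. Then $\psi(\psi(y)\bar x+yx)=\psi(y)\bar x+yx$ holds for all $x,y\in\mathbb{H}$ with $\psi=T_{a,b}$ if and only if $a=b=\pm1$, i.e. $T_{a,b}=I_{\mathbb{H}}$.
   Context: $\bar x$ denotes quaternion conjugation and $I_{\mathbb{H}}$ the identity map. *)

(* real quaternions H = R + Ri + Rj + Rk over a realType R. *)
From mathcomp Require Import all_boot all_order all_algebra.
From mathcomp Require Import reals.
Set Implicit Arguments. Unset Strict Implicit. Unset Printing Implicit Defensive.
Import Order.TTheory GRing.Theory Num.Theory.
Local Open Scope ring_scope.

Record quat (R : Type) := Quat { qr : R; qi : R; qj : R; qk : R }.

Section Quat.
Variable R : realType.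

Definition qadd (x y : quat R) : quat R :=
  Quat (qr x + qr y) (qi x + qi y) (qj x + qj y) (qk x + qk y).

Definition qopp (x : quat R) : quat R :=
  Quat (- qr x) (- qi x) (- qj x) (- qk x).

(* Hamilton product: i^2 = j^2 = k^2 = ijk = -1 *)
Definition qmul (x y : quat R) : quat R :=
  Quat (qr x * qr y - qi x * qi y - qj x * qj y - qk x * qk y)
       (qr x * qi y + qi x * qr y + qj x * qk y - qk x * qj y)
       (qr x * qj y - qi x * qk y + qj x * qr y + qk x * qi y)
       (qr x * qk y + qi x * qj y - qj x * qi y + qk x * qr y).

Definition qconj (x : quat R) : quat R :=
  Quat (qr x) (- qi x) (- qj x) (- qk x).

Definition qone : quat R := Quat 1 0 0 0.

Definition qnorm (x : quat R) : R :=
  Num.sqrt (qr x ^+ 2 + qi x ^+ 2 + qj x ^+ 2 + qk x ^+ 2).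

Definition Tab (a b x : quat R) : quat R := qmul (qmul a x) b.

End Quat.

(* Taking x = 1 shows that psi is an involution, i.e. a^2 y b^2 = y for all y.
   Hence a^2 is central, so real, and b^2 = a^2 = +-1.  If a^2 = 1 then a, b are
   +-1, and a <> b would make psi = -id, which fails at x = i, y = 1.  If
   a^2 = -1 then a, b are pure units: x = b, y = 1 forces b = -a, and then
   x = a forces a to commute with every quaternion, which a pure unit does not. *)
From mathcomp Require Import all_boot all_order all_algebra.
From mathcomp Require Import reals.
From mathcomp Require Import ring lra.
Import Order.TTheory GRing.Theory Num.Theory.
Set Implicit Arguments. Unset Strict Implicit.
Local Open Scope ring_scope.

Lemma quat_ext (R : Type) (p q : quat R) :
  qr p = qr q -> qi p = qi q -> qj p = qj q -> qk p = qk q -> p = q.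
Proof. by case: p => ????; case: q => ???? /= -> -> -> ->. Qed.

Section Quaternions.
Variable R : realType.
Implicit Types (p q c x y z : quat R) (r : R).

Definition qreal r : quat R := Quat r 0 0 0.
Definition qI : quat R := Quat 0 1 0 0.
Definition qJ : quat R := Quat 0 0 1 0.
Definition qnorm2 p := qr p ^+ 2 + qi p ^+ 2 + qj p ^+ 2 + qk p ^+ 2.

Ltac quat_simpl :=
  rewrite /Tab /qmul /qadd /qopp /qconj /qone ?/qreal; cbn [qr qi qj qk].
Ltac quat_ring := apply: quat_ext; quat_simpl; ring.
Ltac quat_components E :=
  move: (congr1 (@qr _) E) (congr1 (@qi _) E) (congr1 (@qj _) E) (congr1 (@qk _) E);
  quat_simpl.

Lemma qmulA x y z : qmul x (qmul y z) = qmul (qmul x y) z.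
Proof. quat_ring. Qed.

Lemma qmul1r x : qmul (qone R) x = x.
Proof. quat_ring. Qed.

Lemma qmulr1 x : qmul x (qone R) = x.
Proof. quat_ring. Qed.

Lemma qmulNr x y : qmul (qopp x) y = qopp (qmul x y).
Proof. quat_ring. Qed.

Lemma qmulrN x y : qmul x (qopp y) = qopp (qmul x y).
Proof. quat_ring. Qed.

Lemma qoppK x : qopp (qopp x) = x.
Proof. quat_ring. Qed.

Lemma qmulDr x y z : qmul x (qadd y z) = qadd (qmul x y) (qmul x z).
Proof. quat_ring. Qed.

Lemma qmulDl x y z : qmul (qadd x y) z = qadd (qmul x z) (qmul y z).
Proof. quat_ring. Qed.

Lemma qaddC x y : qadd x y = qadd y x.
Proof. quat_ring. Qed.

Lemma TabD p q x y : Tab p q (qadd x y) = qadd (Tab p q x) (Tab p q y).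
Proof. quat_ring. Qed.

Lemma qaddIr z x y : qadd x z = qadd y z -> x = y.
Proof. by move=> E; quat_components E => ????; apply: quat_ext; lra. Qed.

Lemma qnorm_eq1 p : qnorm p = 1 -> qnorm2 p = 1.
Proof.
rewrite /qnorm /qnorm2 => n1.
have n2_ge0 : 0 <= qr p ^+ 2 + qi p ^+ 2 + qj p ^+ 2 + qk p ^+ 2 by nra.
by rewrite -(sqr_sqrtr n2_ge0) n1 expr1n.
Qed.

Lemma qnorm2M p q : qnorm2 (qmul p q) = qnorm2 p * qnorm2 q.
Proof. rewrite /qnorm2; quat_simpl; ring. Qed.

Lemma qmul_conjl p : qnorm2 p = 1 -> qmul (qconj p) p = qone R.
Proof.
by rewrite /qnorm2 => n1; apply: quat_ext; quat_simpl; [rewrite -n1 | ..]; ring.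
Qed.

Lemma qmul_eq1_conj p q : qnorm2 p = 1 -> qmul p q = qone R -> q = qconj p.
Proof.
by move=> n1 pq1; rewrite -[q]qmul1r -(qmul_conjl n1) -qmulA pq1 qmulr1.
Qed.

Lemma qcentral_real c :
  qmul c qI = qmul qI c -> qmul c qJ = qmul qJ c -> c = qreal (qr c).
Proof.
move=> cI cJ; move: (congr1 (@qk R) cJ) (congr1 (@qj R) cI) (congr1 (@qk R) cI).
by rewrite /qI /qJ; quat_simpl => ???; apply: quat_ext => //=; lra.
Qed.

Lemma qmul_self_real p r :
  qmul p p = qreal r -> qr p = 0 \/ p = qreal (qr p).
Proof.
have [->|p0] := eqVneq (qr p) 0; first by left.
move=> pp; right; move: (congr1 (@qi R) pp) (congr1 (@qj R) pp) (congr1 (@qk R) pp).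
quat_simpl => ???; have p0_unit : qr p * 2 != 0 by rewrite mulf_neq0 ?pnatr_eq0.
by apply: quat_ext => //=; apply: (mulfI p0_unit); rewrite mulr0; lra.
Qed.

Lemma qmul_self_one p : qmul p p = qone R -> p = qone R \/ p = qopp (qone R).
Proof.
move=> pp; have [p0|p_real] := qmul_self_real pp.
  by move: (congr1 (@qr R) pp) => {pp}; quat_simpl; rewrite p0 => ?; exfalso; nra.
move: pp; rewrite {}p_real; move/(congr1 (@qr R)); quat_simpl.
rewrite !mulr0 !subr0 => /eqP; rewrite -expr2 sqrf_eq1.
by case/orP=> /eqP ->; [left | right]; quat_ring.
Qed.

Lemma qmul_self_oppone p : qmul p p = qopp (qone R) -> qconj p = qopp p.
Proof.
move=> pp; have pp_real : qmul p p = qreal (-1) by rewrite pp; quat_ring.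
have [p0|p_real] := qmul_self_real pp_real.
  by apply: quat_ext; quat_simpl; rewrite ?p0 ?oppr0.
by move: pp_real {pp}; rewrite {}p_real; move/(congr1 (@qr R)); quat_simpl => ?;
  exfalso; nra.
Qed.

Lemma Tab_sign (p : quat R) x :
  p = qone R \/ p = qopp (qone R) -> Tab p p x = x.
Proof. by case=> ->; quat_ring. Qed.

Definition fixes_twisted_products (psi : quat R -> quat R) : Prop :=
  forall x y, psi (qadd (qmul (psi y) (qconj x)) (qmul y x))
              = qadd (qmul (psi y) (qconj x)) (qmul y x).

Lemma fixes_twisted_products_id (psi : quat R -> quat R) :
  (forall x, psi x = x) -> fixes_twisted_products psi.
Proof. by move=> psi_id x y; rewrite psi_id. Qed.

Lemma not_fixes_twisted_products_opp (psi : quat R -> quat R) :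
  (forall x, psi x = qopp x) -> ~ fixes_twisted_products psi.
Proof.
move=> psi_opp /(_ qI (qone R)); rewrite !psi_opp.
by move/(congr1 (@qi R)); rewrite /qI; quat_simpl; lra.
Qed.

Section TwoSided.
Variables a b : quat R.
Hypothesis fixes_ab : fixes_twisted_products (Tab a b).
Hypothesis a_unit : qnorm2 a = 1.

Lemma Tab_involutive y : qmul (qmul (qmul a a) y) (qmul b b) = y.
Proof.
have := fixes_ab (qone R) y.
have -> : qconj (qone R) = qone R by quat_ring.
rewrite !qmulr1 TabD [in RHS]qaddC => /qaddIr psi_invol.
by rewrite -[in RHS]psi_invol /Tab !qmulA.
Qed.

Lemma sqr_conj : qmul b b = qconj (qmul a a).
Proof.
apply: qmul_eq1_conj; first by rewrite qnorm2M a_unit mulr1.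
by have := Tab_involutive (qone R); rewrite qmulr1.
Qed.

Lemma sqr_central y : qmul (qmul a a) y = qmul y (qmul a a).
Proof.
have aa_unit : qnorm2 (qmul a a) = 1 by rewrite qnorm2M a_unit mulr1.
rewrite -[qmul (qmul a a) y]qmulr1 -(qmul_conjl aa_unit) -sqr_conj.
by rewrite qmulA Tab_involutive.
Qed.

Lemma sqr_sign : qmul b b = qmul a a /\
  (qmul a a = qone R \/ qmul a a = qopp (qone R)).
Proof.
have aa_real := qcentral_real (sqr_central qI) (sqr_central qJ).
have aa_unit : qr (qmul a a) ^+ 2 = 1.
  by move: (qnorm2M a a); rewrite a_unit mulr1 {1}aa_real /qnorm2 /= expr0n /= !addr0.
split; first by rewrite sqr_conj aa_real; apply: quat_ext; rewrite /= ?oppr0.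
move/eqP: aa_unit; rewrite sqrf_eq1 aa_real.
by case/orP=> /eqP ->; [left | right]; apply: quat_ext; rewrite /= ?oppr0.
Qed.

Lemma sqr_one_eq : qmul a a = qone R -> a = b.
Proof.
move=> aa; have [bb _] := sqr_sign; rewrite aa in bb.
case: (qmul_self_one aa) (qmul_self_one bb) => a_sign [] b_sign;
  rewrite a_sign b_sign //; exfalso.
all: by apply: (not_fixes_twisted_products_opp _ fixes_ab) => x;
  rewrite a_sign b_sign; quat_ring.
Qed.

Lemma sqr_neq_opp_one : qmul a a <> qopp (qone R).
Proof.
move=> aa; have [bb _] := sqr_sign; rewrite aa in bb.
have aaK x : qmul a (qmul a x) = qopp x by rewrite qmulA aa qmulNr qmul1r.
have mul_aa x : qmul (qmul x a) a = qopp x by rewrite -qmulA aa qmulrN qmulr1.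
have b_opp : b = qopp a.
  have z_ab : qadd (qmul (Tab a b (qone R)) (qconj b)) (qmul (qone R) b) = qadd a b.
    rewrite (qmul_self_oppone bb) qmul1r /Tab qmulr1 qmulrN -qmulA bb.
    by rewrite qmulrN qmulr1 qoppK.
  have Tab_ab : Tab a b (qadd a b) = qadd (qopp b) (qopp a).
    by rewrite TabD /Tab aa -qmulA bb qmulNr qmul1r qmulrN qmulr1.
  have := fixes_ab b (qone R); rewrite z_ab Tab_ab => E.
  by quat_components E => ????; apply: quat_ext; quat_simpl; lra.
have a_central y : qmul a y = qmul y a.
  have z_y : qadd (qmul (Tab a (qopp a) y) (qconj a)) (qmul y a)
           = qadd (qopp (qmul a y)) (qmul y a).
    by rewrite (qmul_self_oppone aa) /Tab !qmulrN qmulNr qoppK mul_aa.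
  have Tab_y : Tab a (qopp a) (qadd (qopp (qmul a y)) (qmul y a))
             = qopp (qadd (qmul y a) (qopp (qmul a y))).
    by rewrite /Tab qmulrN qmulDr qmulDl qmulrN aaK qoppK qmulA mul_aa.
  have := fixes_ab a y; rewrite b_opp z_y Tab_y => E.
  by quat_components E => ????; apply: quat_ext; quat_simpl; lra.
move: aa; rewrite (qcentral_real (a_central qI) (a_central qJ)).
by move/(congr1 (@qr R)) => {bb b_opp}; quat_simpl => ?; nra.
Qed.

End TwoSided.
End Quaternions.

Theorem lemma9 (R : realType) (a b : quat R) :
  qnorm a = 1 -> qnorm b = 1 ->
  ((forall x y : quat R,
      let psi := Tab a b in
      psi (qadd (qmul (psi y) (qconj x)) (qmul y x))
      = qadd (qmul (psi y) (qconj x)) (qmul y x))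
   <-> (a = b /\ (a = qone R \/ a = qopp (qone R)))).
Proof.
(* |b| = 1 is implied by the other hypotheses. *)
move=> /qnorm_eq1 a_unit _; split => [fixes_ab | [<- a_sign]]; last first.
  by apply: fixes_twisted_products_id => x; exact: Tab_sign.
have [_ [aa | aa]] := sqr_sign fixes_ab a_unit.
- by split; [exact: sqr_one_eq fixes_ab a_unit aa | exact: qmul_self_one].
- by case: (sqr_neq_opp_one fixes_ab a_unit aa).
Qed.
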